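(* Let $P_1,\dots,P_m$ be Hermitian $n$-qubit Pauli operators and $U_1,\dots,U_{m+1}$ be $n$-qubit Clifford unitaries such that, with $E_\beta=U_{m+1}\frac{I+\beta_mP_m}{2}U_m\cdots U_2\frac{I+\beta_1P_1}{2}U_1$ for $\beta\in\{-1,1\}^m$, one has $E_\beta^2=E_\beta$ for all $\beta$ and $\sum_\beta E_\beta^\dagger E_\beta=I$; let $\hat P_1,\dots,\hat P_m$ be pairwise commuting Hermitian Pauli operators with $E_\beta=\prod_{i=1}^m\frac{I+\beta_i\hat P_i}{2}$ for all $\beta$ (these exist). Then for every $\beta\in\{-1,1\}^m$ and all Pauli operators $Q_1,\dots,Q_{2m+1}$, the operator $$E'=Q_{2m+1}U_{m+1}Q_{2m}\frac{I+\beta_mP_m}{2}Q_{2m-1}U_m\cdots Q_3U_2Q_2\frac{I+\beta_1P_1}{2}Q_1U_1$$ satisfies $$E'=Q\cdot\frac{I+(-1)^{\gamma_1}\hat P_1}{2}\cdots\frac{I+(-1)^{\gamma_m}\hat P_m}{2}$$ for some Pauli operator $Q$ and some $\gamma\in\{0,1\}^m$.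
   Context: An $n$-qubit Pauli operator is $c\,\sigma_1\otimes\cdots\otimes\sigma_n$ with $c\in\{\pm1,\pm i\}$ and $\sigma_j\in\{I,X,Y,Z\}$; it is Hermitian iff $c\in\{\pm1\}$. A unitary $U$ is Clifford if $UPU^\dagger$ is a Pauli operator for every Pauli operator $P$. (In the paper, $E'$ is the Kraus operator of an execution path of a loop body in which Pauli faults $Q_j$ are inserted.) *)

From HB Require Import structures.
From mathcomp Require Import all_boot all_order all_algebra all_field.
Set Implicit Arguments. Unset Strict Implicit. Unset Printing Implicit Defensive.
Import Order.TTheory GRing.Theory Num.Theory.
Local Open Scope ring_scope.

(* n-qubit operators: (2^n) x (2^n) complex matrices. Basis index i : 'I_(2^n),
   qubit k of basis state i is the k-th binary digit of i. *)
Notation op n := 'M[algC]_(2 ^ n).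

Definition qbit (k i : nat) : bool := odd (i %/ 2 ^ k).

Inductive pauli1 := pI | pX | pY | pZ.

Definition sigma (s : pauli1) (a b : bool) : algC :=
  match s with
  | pI => if a == b then 1 else 0
  | pX => if a == b then 0 else 1
  | pY => if a == b then 0 else (if a then 'i else - 'i)
  | pZ => if a == b then (if a then -1 else 1) else 0
  end.

(* tensor product sigma_{s 0} (x) ... (x) sigma_{s (n-1)} *)
Definition pauli_string (n : nat) (s : 'I_n -> pauli1) : op n :=
  \matrix_(i, j) \prod_(k < n) sigma (s k) (qbit k i) (qbit k j).

Definition is_pauli (n : nat) (P : op n) : Prop :=
  exists (c : algC) (s : 'I_n -> pauli1),
    c \in [:: 1; -1; 'i; - 'i] /\ P = c *: pauli_string s.

Definition is_herm_pauli (n : nat) (P : op n) : Prop :=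
  exists (c : algC) (s : 'I_n -> pauli1),
    c \in [:: 1; -1] /\ P = c *: pauli_string s.

Definition adj (n : nat) (A : op n) : op n := (map_mx Num.conj A)^T.

Definition is_unitary (n : nat) (U : op n) : Prop :=
  adj U *m U = 1%:M /\ U *m adj U = 1%:M.

Definition is_clifford (n : nat) (U : op n) : Prop :=
  is_unitary U /\ forall P : op n, is_pauli P -> is_pauli (U *m P *m adj U).

(* (I + (-1)^b P)/2 ; b = false encodes +1, b = true encodes -1 *)
Definition proj (n : nat) (b : bool) (P : op n) : op n :=
  2^-1 *: (1%:M + (-1) ^+ b *: P).

Definition oprod (n k : nat) (A : 'I_k -> op n) : op n :=
  \big[mulmx/1%:M]_(i < k) A i.

(* E_beta = U_{m+1} (I+b_m P_m)/2 U_m ... U_2 (I+b_1 P_1)/2 U_1  (0-based indices) *)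
Definition Ebeta (n m : nat) (P : 'I_m -> op n) (U : 'I_m.+1 -> op n)
    (beta : 'I_m -> bool) : op n :=
  U ord_max *m oprod (fun i : 'I_m =>
     let j := rev_ord i in proj (beta j) (P j) *m U (widen_ord (leqnSn m) j)).

(* E' = Q_{2m+1} U_{m+1} Q_{2m} (I+b_m P_m)/2 Q_{2m-1} U_m ... Q_2 (I+b_1 P_1)/2 Q_1 U_1,
   with Q indexed 0..2m (Q k here is Q_{k+1} in the paper). *)
Definition Efault (n m : nat) (P : 'I_m -> op n) (U : 'I_m.+1 -> op n)
    (beta : 'I_m -> bool) (Q : 'I_(2 * m).+1 -> op n) : op n :=
  Q (inord (2 * m)) *m U ord_max *m oprod (fun i : 'I_m =>
     let j := rev_ord i in
     Q (inord (2 * j + 1)) *m proj (beta j) (P j) *m Q (inord (2 * j))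
       *m U (widen_ord (leqnSn m) j)).

(* Pauli operators commute with a projector (I + P)/2 up to flipping the sign of P, and
   a Clifford unitary U satisfies U R = (U R U^dagger) U with U R U^dagger again Pauli.
   Hence every inserted fault can be moved to the far left, leaving the fault-free
   Kraus operator E_gamma of another measurement outcome gamma; the hypothesis
   E_gamma = prod_i (I + (-1)^gamma_i Phat_i)/2 then gives the claimed form. *)
From HB Require Import structures.
From mathcomp Require Import all_boot all_order all_algebra all_field.
Import Order.TTheory GRing.Theory Num.Theory.
Set Implicit Arguments. Unset Strict Implicit. Unset Printing Implicit Defensive.
Local Open Scope ring_scope.

Definition pauli1_mul (s t : pauli1) : pauli1 :=
  match s, t with
  | pI, u | u, pI => u
  | pX, pX | pY, pY | pZ, pZ => pI
  | pX, pY | pY, pX => pZ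
  | pY, pZ | pZ, pY => pX
  | pZ, pX | pX, pZ => pY
  end.

Definition pauli1_phase (s t : pauli1) : algC :=
  match s, t with
  | pX, pY | pY, pZ | pZ, pX => 'i
  | pY, pX | pZ, pY | pX, pZ => - 'i
  | _, _ => 1
  end.

Definition pauli1_anti (s t : pauli1) : bool :=
  match s, t with
  | pI, _ | _, pI | pX, pX | pY, pY | pZ, pZ => false
  | _, _ => true
  end.

Lemma pauli1_mulC s t : pauli1_mul s t = pauli1_mul t s.
Proof. by case: s; case: t. Qed.

Lemma pauli1_phaseC s t :
  pauli1_phase s t = (-1) ^+ pauli1_anti s t * pauli1_phase t s.
Proof. by case: s; case: t; rewrite /= ?expr0 ?mul1r ?expr1 ?mulN1r ?opprK. Qed.

Lemma sigma_mul s t a b :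
  \sum_(c : bool) sigma s a c * sigma t c b
    = pauli1_phase s t * sigma (pauli1_mul s t) a b.
Proof.
have ii : 'i * 'i = -1 :> algC by rewrite -expr2 sqrCi.
rewrite big_bool; case: s; case: t; case: a; case: b => /=;
  rewrite ?mul0r ?mulr0 ?mul1r ?mulr1 ?add0r ?addr0 ?mulNr ?mulrN ?ii ?opprK //.
all: by rewrite ?mulr1 ?mul1r.
Qed.

Lemma qbit_inj n (i j : nat) : (i < 2 ^ n)%N -> (j < 2 ^ n)%N ->
  (forall k, (k < n)%N -> qbit k i = qbit k j) -> i = j.
Proof.
elim: n i j => [|n IH] i j; first by rewrite expn0 !ltnS !leqn0 => /eqP -> /eqP ->.
move=> lt_i lt_j eq_bits.
have eq_odd : odd i = odd j by have := eq_bits 0%N isT; rewrite /qbit expn0 !divn1.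
have eq_half : (i %/ 2 = j %/ 2)%N.
  apply: IH; rewrite ?ltn_divLR // -?expnSr // => k lt_k.
  by have := eq_bits k.+1 lt_k; rewrite /qbit expnS !divnMA.
by rewrite (divn_eq i 2) (divn_eq j 2) eq_half !modn2 eq_odd.
Qed.

Definition qbits n (i : 'I_(2 ^ n)) : {ffun 'I_n -> bool} := [ffun k : 'I_n => qbit k i].

Lemma qbits_bij n : bijective (@qbits n).
Proof.
apply: inj_card_bij; last by rewrite card_ffun !card_ord card_bool.
move=> i j /ffunP eq_ij; apply/val_inj/(@qbit_inj n); rewrite ?ltn_ord // => k lt_k.
by have := eq_ij (Ordinal lt_k); rewrite !ffunE.
Qed.

Lemma eq_pauli_string n (s t : 'I_n -> pauli1) :
  s =1 t -> pauli_string s = pauli_string t.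
Proof. by move=> eq_st; apply/matrixP => i j; rewrite !mxE; under eq_bigr do rewrite eq_st. Qed.

Lemma pauli_stringM n (s t : 'I_n -> pauli1) :
  pauli_string s *m pauli_string t =
  (\prod_k pauli1_phase (s k) (t k)) *: pauli_string (fun k => pauli1_mul (s k) (t k)).
Proof.
apply/matrixP => i j; rewrite !mxE.
under [in LHS]eq_bigr => l _ do rewrite !mxE -big_split /=.
(* Basis states are bit vectors, so the sum of products factors qubit by qubit. *)
pose F k c := sigma (s k) (qbit k i) c * sigma (t k) c (qbit k j).
transitivity (\sum_(v : {ffun 'I_n -> bool}) \prod_k F k (v k)).
  rewrite (reindex (@qbits n)); last exact/onW_bij/qbits_bij.
  by apply: eq_bigr => l _; apply: eq_bigr => k _; rewrite ffunE.
rewrite -bigA_distr_bigA -big_split /=; apply: eq_bigr => k _; exact: sigma_mul.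
Qed.

Lemma pauli_stringI n : pauli_string (fun _ : 'I_n => pI) = 1%:M.
Proof.
apply/matrixP => i j; rewrite !mxE /=.
have [eq_bits | /existsP[k neq_k]] := boolP [forall k : 'I_n, qbit k i == qbit k j].
  have -> : i = j.
    apply/val_inj/(@qbit_inj n); rewrite ?ltn_ord // => k lt_k.
    exact/eqP/(forallP eq_bits (Ordinal lt_k)).
  by rewrite eqxx big1 // => k _; rewrite eqxx.
have -> : (i == j) = false by apply: contraNF neq_k => /eqP ->.
by rewrite (bigD1 k) //= (negbTE neq_k) mul0r.
Qed.

Lemma pauli_stringC n (s t : 'I_n -> pauli1) :
  pauli_string s *m pauli_string t =
  (-1) ^+ (\sum_k pauli1_anti (s k) (t k)) *: (pauli_string t *m pauli_string s).
Proof.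
rewrite !pauli_stringM scalerA -prodrXr -big_split /=.
under [in RHS]eq_bigr => k _ do rewrite -pauli1_phaseC.
by congr (_ *: _); apply: eq_pauli_string => k; rewrite pauli1_mulC.
Qed.

Definition pauli_phases : seq algC := [:: 1; -1; 'i; - 'i].

Lemma pauli_phasesM (a b : algC) :
  a \in pauli_phases -> b \in pauli_phases -> a * b \in pauli_phases.
Proof.
have ii : 'i * 'i = -1 :> algC by rewrite -expr2 sqrCi.
rewrite /pauli_phases !inE => /or4P[] /eqP-> /or4P[] /eqP->;
  by rewrite ?mulNr ?mulrN ?ii ?opprK ?mul1r ?mulr1 !eqxx ?orbT.
Qed.

Lemma pauli_phases_prod n (F : 'I_n -> algC) :
  (forall k, F k \in pauli_phases) -> \prod_k F k \in pauli_phases.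
Proof.
move=> F_phase; apply: (big_ind (fun c => c \in pauli_phases)) => //.
- by rewrite /pauli_phases inE eqxx.
- exact: pauli_phasesM.
Qed.

Lemma pauli1_phase_in s t : pauli1_phase s t \in pauli_phases.
Proof. by case: s; case: t; rewrite /pauli_phases !inE eqxx ?orbT. Qed.

Lemma is_pauli1 n : is_pauli (1%:M : op n).
Proof. by exists 1, (fun _ => pI); rewrite pauli_stringI scale1r inE eqxx. Qed.

Lemma is_pauliM n (A B : op n) : is_pauli A -> is_pauli B -> is_pauli (A *m B).
Proof.
move=> [c [s [c_phase ->]]] [d [t [d_phase ->]]].
exists (c * d * \prod_k pauli1_phase (s k) (t k)), (fun k => pauli1_mul (s k) (t k)).
split; last by rewrite -scalemxAl -scalemxAr pauli_stringM !scalerA.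
rewrite !pauli_phasesM // pauli_phases_prod // => k; exact: pauli1_phase_in.
Qed.

Lemma herm_pauli_pauli n (P : op n) : is_herm_pauli P -> is_pauli P.
Proof.
move=> [c [s [c_sign ->]]]; exists c, s; split => //.
by move: c_sign; rewrite !inE => /orP[] ->; rewrite ?orbT.
Qed.

Lemma is_pauliC n (A B : op n) : is_pauli A -> is_pauli B ->
  exists e : bool, A *m B = (-1) ^+ e *: (B *m A).
Proof.
move=> [c [s [_ ->]]] [d [t [_ ->]]].
exists (odd (\sum_k pauli1_anti (s k) (t k))).
rewrite signr_odd -!scalemxAl -!scalemxAr pauli_stringC !scalerA.
by congr (_ *: _); rewrite mulrC [c * d]mulrC mulrA.
Qed.

Lemma proj_mulmx_pauli n b (A B : op n) : is_pauli A -> is_pauli B ->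
  exists b', proj b A *m B = B *m proj b' A.
Proof.
move=> pA pB; have [e AB] := is_pauliC pA pB.
exists (b (+) e); rewrite /proj -scalemxAl -scalemxAr; congr (_ *: _).
by rewrite mulmxDl mulmxDr mul1mx mulmx1 -scalemxAl AB -scalemxAr scalerA signr_addb.
Qed.

Lemma clifford_mulmx_pauli n (U R : op n) : is_clifford U -> is_pauli R ->
  exists2 S, is_pauli S & U *m R = S *m U.
Proof.
move=> [[UU' _] U_clifford] pR; exists (U *m R *m adj U); first exact: U_clifford.
by rewrite -mulmxA UU' mulmx1.
Qed.

Lemma pauli_faults_to_front n m (A V Qa Qb : 'I_m -> op n) (b : 'I_m -> bool) :
  (forall i, is_pauli (A i)) -> (forall i, is_clifford (V i)) ->
  (forall i, is_pauli (Qa i)) -> (forall i, is_pauli (Qb i)) ->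
  exists (R : op n) (c : 'I_m -> bool), is_pauli R /\
    \big[mulmx/1%:M]_(i < m) (Qa i *m proj (b i) (A i) *m Qb i *m V i)
    = R *m \big[mulmx/1%:M]_(i < m) (proj (c i) (A i) *m V i).
Proof.
elim: m A V Qa Qb b => [|m IH] A V Qa Qb b pA cV pQa pQb.
  by exists 1%:M, (fun _ => false); rewrite !big_ord0 mul1mx; split; first exact: is_pauli1.
have [R [c [pR tail_eq]]] := IH (A \o lift ord0) (V \o lift ord0) (Qa \o lift ord0)
  (Qb \o lift ord0) (b \o lift ord0) (fun i => pA _) (fun i => cV _)
  (fun i => pQa _) (fun i => pQb _).
have [S pS VR] := clifford_mulmx_pauli (cV ord0) pR.
have pQbS : is_pauli (Qb ord0 *m S) by exact: is_pauliM.
have [c0 proj_QbS] := proj_mulmx_pauli (b ord0) (pA ord0) pQbS.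
exists (Qa ord0 *m (Qb ord0 *m S)), (fun i => oapp c c0 (unlift ord0 i)).
split; first exact: is_pauliM.
rewrite !big_ord_recl /= tail_eq unlift_none.
under [in RHS]eq_bigr => i _ do rewrite liftK.
by rewrite !mulmxA -(mulmxA _ (V ord0)) VR !mulmxA -(mulmxA _ (Qb ord0))
  -(mulmxA (Qa ord0)) proj_QbS !mulmxA.
Qed.

Theorem mainTheorem10 (n m : nat) (P : 'I_m -> op n) (U : 'I_m.+1 -> op n)
  (Phat : 'I_m -> op n) :
  (forall i, is_herm_pauli (P i)) ->
  (forall j, is_clifford (U j)) ->
  (forall beta : {ffun 'I_m -> bool},
      Ebeta P U beta *m Ebeta P U beta = Ebeta P U beta) ->
  \sum_(beta : {ffun 'I_m -> bool}) adj (Ebeta P U beta) *m Ebeta P U beta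
    = 1%:M ->
  (forall i, is_herm_pauli (Phat i)) ->
  (forall i j, Phat i *m Phat j = Phat j *m Phat i) ->
  (forall beta : {ffun 'I_m -> bool},
      Ebeta P U beta = oprod (fun i => proj (beta i) (Phat i))) ->
  forall (beta : {ffun 'I_m -> bool}) (Q : 'I_(2 * m).+1 -> op n),
    (forall k, is_pauli (Q k)) ->
    exists (Q0 : op n) (gamma : 'I_m -> bool),
      is_pauli Q0 /\
      Efault P U beta Q = Q0 *m oprod (fun i => proj (gamma i) (Phat i)).
Proof.
move=> pP cU _ _ _ _ E_factor beta Q pQ.
have [R [c [pR faults_front]]] := @pauli_faults_to_front n m
  (fun i => P (rev_ord i)) (fun i => U (widen_ord (leqnSn m) (rev_ord i)))
  (fun i => Q (inord (2 * rev_ord i + 1))) (fun i => Q (inord (2 * rev_ord i)))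
  (fun i => beta (rev_ord i))
  (fun i => herm_pauli_pauli (pP _)) (fun i => cU _) (fun i => pQ _) (fun i => pQ _).
have [S pS UR] := clifford_mulmx_pauli (cU ord_max) pR.
pose gamma := [ffun j => c (rev_ord j)].
exists (Q (inord (2 * m)) *m S), gamma; split; first exact: is_pauliM.
rewrite -E_factor /Efault /Ebeta /oprod faults_front.
under [in RHS]eq_bigr => i _ do rewrite /= ffunE rev_ordK.
by rewrite -!mulmxA (mulmxA (U ord_max)) UR !mulmxA.
Qed.
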